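(* Let $G_*$ be a (not necessarily symmetric) crossed simplicial group with structural projection $\pi\colon G_*\to N_*$, and suppose there exists a morphism of simplicial sets $\eta\colon N_*\to G_*$ with $\pi\circ\eta=\mathrm{id}_{N_*}$. Then $\pi\colon G_*\to N_*$ is a Kan fibration of simplicial sets.
   Context: A crossed simplicial group $G_*$ consists of groups $G_n$ ($n\ge0$), a left action of $G_n$ on $[n]=\{0,\dots,n\}$, and maps $d_i\colon G_n\to G_{n-1}$, $s_i\colon G_n\to G_{n+1}$ making $G_*$ a simplicial set, such that $d_i(gh)=d_i(g)d_{g^{-1}(i)}(h)$ and $s_i(gh)=s_i(g)s_{g^{-1}(i)}(h)$. By the structure theorem of Fiedorowicz–Loday and Krasauskas there is a canonical short exact sequence of crossed simplicial groups $1\to P_*\to G_*\xrightarrow{\pi}N_*\to1$ where $P_*$ is a simplicial group and $N_*$ is one of the seven crossed simplicial groups $\{1\}, C_*, \mathbb{Z}/2, S_*, D_*, \mathbb{Z}/2\times S_*, H_*$; $\pi$ is called the structural projection. *)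

From mathcomp Require Import all_boot.
Set Implicit Arguments. Unset Strict Implicit. Unset Printing Implicit Defensive.

(* face n i : X_{n+1} -> X_n  is d_i  (meaningful for i <= n+1)        *)
(* degen n i : X_n -> X_{n+1} is s_i  (meaningful for i <= n)          *)
(* Values at out-of-range indices are junk and never constrained.      *)
Record SSet := {
  sobj :> nat -> Type;
  face : forall n, nat -> sobj n.+1 -> sobj n;
  degen : forall n, nat -> sobj n -> sobj n.+1;
  face_face : forall n (x : sobj n.+2) i j, i < j -> j <= n.+2 ->
    face i (face j x) = face j.-1 (face i x);
  degen_degen : forall n (x : sobj n) i j, i <= j -> j <= n ->
    degen i (degen j x) = degen j.+1 (degen i x);
  face_degen_lt : forall n (x : sobj n.+1) i j, i < j -> j <= n.+1 ->
    face i (degen j x) = degen j.-1 (face i x);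
  face_degen_eq : forall n (x : sobj n) i j, j <= n -> (i = j \/ i = j.+1) ->
    face i (degen j x) = x;
  face_degen_gt : forall n (x : sobj n.+1) i j, j.+1 < i -> i <= n.+2 ->
    face i (degen j x) = degen j (face i.-1 x)
}.
Arguments face {s n}.
Arguments degen {s n}.

Definition is_smap (X Y : SSet) (f : forall n, X n -> Y n) : Prop :=
  (forall n i (x : X n.+1), i <= n.+1 -> f n (face i x) = face i (f n.+1 x)) /\
  (forall n i (x : X n), i <= n -> f n.+1 (degen i x) = degen i (f n x)).

Record CSG := {
  css :> SSet;
  mul : forall n, css n -> css n -> css n;
  one : forall n, css n;
  inv : forall n, css n -> css n;
  mulA : forall n (a b c : css n), mul a (mul b c) = mul (mul a b) c;
  mul1g : forall n (a : css n), mul (one n) a = a;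
  mulVg : forall n (a : css n), mul (inv a) a = one n;
  act : forall n, css n -> nat -> nat;
  act_range : forall n (g : css n) i, i <= n -> act g i <= n;
  act1 : forall n i, i <= n -> act (one n) i = i;
  actM : forall n (g h : css n) i, i <= n -> act (mul g h) i = act g (act h i);
  face_mul : forall n (g h : css n.+1) i, i <= n.+1 ->
    face i (mul g h) = mul (face i g) (face (act (inv g) i) h);
  degen_mul : forall n (g h : css n) i, i <= n ->
    degen i (mul g h) = mul (degen i g) (degen (act (inv g) i) h)
}.
Arguments mul {c0 n} : rename.
Arguments one {c0} : rename.
Arguments inv {c0 n} : rename.
Arguments act {c0 n} : rename.

Definition is_csg_morphism (G N : CSG) (f : forall n, G n -> N n) : Prop :=
  is_smap f /\
  (forall n (g h : G n), f n (mul g h) = mul (f n g) (f n h)) /\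
  (forall n (g : G n) i, i <= n -> act (f n g) i = act g i).

(* N is reduced: it has no nontrivial normal crossed simplicial subgroup
   acting trivially on the [n] (i.e. no nontrivial normal sub-simplicial
   group).  The seven crossed simplicial groups of the structure theorem
   are exactly the reduced quotients. *)
Definition csg_reduced (N : CSG) : Prop :=
  forall Q : forall n, N n -> Prop,
    (forall n, Q n (one n)) ->
    (forall n (x y : N n), Q n x -> Q n y -> Q n (mul x y)) ->
    (forall n (x : N n), Q n x -> Q n (inv x)) ->
    (forall n (g x : N n), Q n x -> Q n (mul (mul g x) (inv g))) ->
    (forall n i (x : N n.+1), i <= n.+1 -> Q n.+1 x -> Q n (face i x)) ->
    (forall n i (x : N n), i <= n -> Q n x -> Q n.+1 (degen i x)) ->
    (forall n (x : N n) i, Q n x -> i <= n -> act x i = i) ->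
    forall n (x : N n), Q n x -> x = one n.

(* pi : G_* -> N_* is the structural projection: a levelwise surjective
   morphism of crossed simplicial groups (its kernel P_* then acts
   trivially, i.e. is a simplicial group) onto a reduced crossed
   simplicial group.  This determines 1 -> P_* -> G_* -> N_* -> 1 up to
   isomorphism (P_* is the largest normal sub-simplicial group of G_* ) . *)
Definition is_structural_projection (G N : CSG) (pi : forall n, G n -> N n)
  : Prop :=
  is_csg_morphism pi /\
  (forall n (y : N n), exists x : G n, pi n x = y) /\
  csg_reduced N.

(* Kan fibrations.  A horn Lambda^{m+1}_k in X is a family x_i in X_m, *)
(* i in [m+1] \ {k}, with d_i x_j = d_{j-1} x_i for i < j.             *)
Definition horn_compat (X : SSet) (m : nat) : (nat -> X m) -> nat -> Prop :=
  match m return (nat -> X m) -> nat -> Prop with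
  | 0 => fun _ _ => True
  | m'.+1 => fun x k => forall i j, i < j -> j <= m'.+2 -> i != k -> j != k ->
      @face X m' i (x j) = @face X m' j.-1 (x i)
  end.

Definition is_kan_fibration (X Y : SSet) (p : forall n, X n -> Y n) : Prop :=
  forall (m k : nat) (x : nat -> X m) (y : Y m.+1),
    k <= m.+1 ->
    horn_compat x k ->
    (forall i, i <= m.+1 -> i != k -> face i y = p m (x i)) ->
    exists z : X m.+1,
      (forall i, i <= m.+1 -> i != k -> face i z = x i) /\ p m.+1 z = y.

From mathcomp Require Import all_boot zify.
Set Implicit Arguments. Unset Strict Implicit.

(* The kernel P of pi acts trivially on each [n], so on P the twisted laws
   d_i(gh) = d_i(g) d_{g^-1(i)}(h) and s_i(gh) = s_i(g) s_{g^-1(i)}(h) become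
   plain homomorphism laws: P is a simplicial group, and Moore's inductive
   filling of horns one face at a time works inside P.  A horn x over y in G
   is moved into P by the quotients x_i (d_i w)^-1, where w is any lift of y;
   these still form a horn because x_i and d_i w lie over the same simplex and
   hence act identically on [m].  A filler p in P then yields the filler p w. *)

Section CSGTheory.
Variable C : CSG.

Lemma mulgV n (a : C n) : mul a (inv a) = one n.
Proof.
by rewrite -[mul a _]mul1g -(mulVg (inv a)) -mulA (mulA (inv a)) mulVg mul1g.
Qed.

Lemma mulg1 n (a : C n) : mul a (one n) = a.
Proof. by rewrite -(mulVg a) mulA mulgV mul1g. Qed.

Lemma mulKg n (a b : C n) : mul (inv a) (mul a b) = b.
Proof. by rewrite mulA mulVg mul1g. Qed.

Lemma mulgK n (a b : C n) : mul (mul b a) (inv a) = b.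
Proof. by rewrite -mulA mulgV mulg1. Qed.

Lemma mulgKV n (a b : C n) : mul (mul b (inv a)) a = b.
Proof. by rewrite -mulA mulVg mulg1. Qed.

Lemma eq_one_of_mul_eq n (a b : C n) : mul a b = a -> b = one n.
Proof. by move=> ab_a; rewrite -(mulKg a b) ab_a mulVg. Qed.

Lemma inv_eq_of_mul_eq1 n (a b : C n) : mul a b = one n -> a = inv b.
Proof. by move=> ab1; rewrite -(mulgK b a) ab1 mul1g. Qed.

Lemma inv1 n : inv (one n) = one (c0:=C) n.
Proof. by rewrite -(mulg1 (inv _)) mulVg. Qed.

Lemma actKV n (g : C n) i : i <= n -> act g (act (inv g) i) = i.
Proof. by move=> le_in; rewrite -actM // mulgV act1. Qed.

Lemma actK n (g : C n) i : i <= n -> act (inv g) (act g i) = i.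
Proof. by move=> le_in; rewrite -actM // mulVg act1. Qed.

Lemma face1 n i : i <= n.+1 -> face i (one (c0:=C) n.+1) = one n.
Proof.
move=> le_in; apply: (@eq_one_of_mul_eq _ (face i (one n.+1))).
by rewrite -{3}(mul1g (one n.+1)) face_mul // inv1 act1.
Qed.

Lemma degen1 n i : i <= n -> degen i (one (c0:=C) n) = one n.+1.
Proof.
move=> le_in; apply: (@eq_one_of_mul_eq _ (degen i (one n))).
by rewrite -{3}(mul1g (one n)) degen_mul // inv1 act1.
Qed.

Lemma face_inv n (g : C n.+1) i : i <= n.+1 ->
  face i (inv g) = inv (face (act g i) g).
Proof.
move=> le_in; have le_gi : act g i <= n.+1 by apply: act_range.
have := face_mul g (inv g) le_gi.
rewrite mulgV face1 // actK // => face_gVg.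
by rewrite -(mulKg (face (act g i) g) (face i (inv g))) -face_gVg mulg1.
Qed.

Lemma face_mulV n (a b : C n.+1) i : i <= n.+1 ->
  (forall l, l <= n.+1 -> act a l = act b l) ->
  face i (mul a (inv b)) = mul (face i a) (inv (face i b)).
Proof.
move=> le_in act_ab; have le_aVi : act (inv a) i <= n.+1 by apply: act_range.
by rewrite face_mul // face_inv // -act_ab // actKV.
Qed.

End CSGTheory.

Section Kernel.
Variables (G N : CSG) (pi : forall n, G n -> N n).
Hypothesis pi_morph : is_csg_morphism pi.

Lemma piM n (g h : G n) : pi (mul g h) = mul (pi g) (pi h).
Proof. by case: pi_morph => _ [piM _]; apply: piM. Qed.

Lemma pi_act n (g : G n) i : i <= n -> act (pi g) i = act g i.
Proof. by case: pi_morph => _ [_ pi_act]; apply: pi_act. Qed.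

Lemma pi_face n i (g : G n.+1) : i <= n.+1 -> pi (face i g) = face i (pi g).
Proof. by case: pi_morph => [[pi_face _] _]; apply: pi_face. Qed.

Lemma pi_degen n i (g : G n) : i <= n -> pi (degen i g) = degen i (pi g).
Proof. by case: pi_morph => [[_ pi_degen] _]; apply: pi_degen. Qed.

Lemma pi1 n : pi (one n) = one n.
Proof. by apply: (@eq_one_of_mul_eq _ _ (pi (one n))); rewrite -piM mul1g. Qed.

Lemma piV n (g : G n) : pi (inv g) = inv (pi g).
Proof. by apply: inv_eq_of_mul_eq1; rewrite -piM mulVg pi1. Qed.

Lemma act_eq_of_pi_eq n (g h : G n) i : pi g = pi h -> i <= n ->
  act g i = act h i.
Proof. by move=> pi_gh le_in; rewrite -!pi_act // pi_gh. Qed.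

Definition in_kernel n (g : G n) := pi g = one n.

Lemma in_kernel1 n : in_kernel (one n).
Proof. exact: pi1. Qed.

Lemma in_kernelM n (g h : G n) :
  in_kernel g -> in_kernel h -> in_kernel (mul g h).
Proof. by rewrite /in_kernel piM => -> ->; rewrite mul1g. Qed.

Lemma in_kernelV n (g : G n) : in_kernel g -> in_kernel (inv g).
Proof. by rewrite /in_kernel piV => ->; rewrite inv1. Qed.

Lemma in_kernel_face n i (g : G n.+1) :
  i <= n.+1 -> in_kernel g -> in_kernel (face i g).
Proof. by move=> le_in; rewrite /in_kernel pi_face // => ->; rewrite face1. Qed.

Lemma in_kernel_degen n i (g : G n) :
  i <= n -> in_kernel g -> in_kernel (degen i g).
Proof.
by move=> le_in; rewrite /in_kernel pi_degen // => ->; rewrite degen1.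
Qed.

Lemma in_kernel_act n (g : G n) i : i <= n -> in_kernel g -> act g i = i.
Proof. by move=> le_in g_ker; rewrite -pi_act // g_ker act1. Qed.

Lemma face_mul_ker n i (g h : G n.+1) : i <= n.+1 -> in_kernel g ->
  face i (mul g h) = mul (face i g) (face i h).
Proof.
by move=> le_in g_ker; rewrite face_mul // in_kernel_act //; apply: in_kernelV.
Qed.

Lemma face_inv_ker n i (g : G n.+1) : i <= n.+1 -> in_kernel g ->
  face i (inv g) = inv (face i g).
Proof. by move=> le_in g_ker; rewrite face_inv // in_kernel_act. Qed.

Section KernelHornFilling.
Variables (n k : nat) (y : nat -> G n.+1).
Hypothesis y_ker : forall i, i <= n.+2 -> i != k -> in_kernel (y i).
Hypothesis y_compat : forall i j, i < j -> j <= n.+2 -> i != k -> j != k ->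
  face i (y j) = face j.-1 (y i).

(* Moore's step: correcting w by s_t((d_j w)^-1 y_j) fixes face j and, since
   d_j w and y_j have the same faces by compatibility, leaves the faces in D
   untouched. *)
Lemma ker_horn_extend (D : nat -> Prop) t j (w : G n.+2) :
  t <= n.+1 -> j = t \/ j = t.+1 -> j != k ->
  (forall i, D i -> [/\ i <= n.+2, i != k & (i < t) || (t.+1 < i)]) ->
  in_kernel w -> (forall i, D i -> face i w = y i) ->
  exists2 w', in_kernel w' & forall i, D i \/ i = j -> face i w' = y i.
Proof.
move=> le_tn j_t ne_jk D_range w_ker w_D.
have le_jn : j <= n.+2 by lia.
have wj_ker : in_kernel (face j w) by apply: in_kernel_face.
set u := mul (inv (face j w)) (y j).
have u_ker : in_kernel u.
  by apply: in_kernelM; [apply: in_kernelV | apply: y_ker].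
have face_u l :
    l <= n.+1 -> face l (face j w) = face l (y j) -> face l u = one n.
  move=> le_ln eq_l.
  rewrite face_mul_ker ?face_inv_ker //; last exact: in_kernelV.
  by rewrite eq_l mulVg.
exists (mul w (degen t u)).
  by apply: in_kernelM => //; apply: in_kernel_degen.
move=> i [Di | ->]; last first.
  rewrite face_mul_ker // face_degen_eq //.
  by rewrite /u mulA mulgV mul1g.
have [le_in ne_ik /orP[lt_it | lt_ti]] := D_range i Di.
- have u_i : face i u = one n.
    apply: face_u; first lia.
    rewrite face_face ?w_D //; last lia.
    by rewrite (@y_compat i j) //; lia.
  by rewrite face_mul_ker // face_degen_lt // w_D // u_i degen1 ?mulg1 //; lia.
- have u_i : face i.-1 u = one n.
    apply: face_u; first lia.
    rewrite -face_face ?w_D //; last lia.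
    by rewrite (@y_compat j i) //; lia.
  by rewrite face_mul_ker // face_degen_gt // w_D // u_i degen1 ?mulg1 //; lia.
Qed.

Hypothesis le_kn : k <= n.+2.

Lemma ker_horn_fill_below a : a <= k ->
  exists2 w, in_kernel w & forall i, i < a -> face i w = y i.
Proof.
elim: a => [|a IH] lt_ak; first by exists (one _) => //; apply: in_kernel1.
have [w w_ker w_below] := IH (ltnW lt_ak).
have le_an : a <= n.+1 by lia.
have ne_ak : a != k by lia.
have below_range i : i < a -> [/\ i <= n.+2, i != k & (i < a) || (a.+1 < i)].
  by move=> lt_ia; rewrite lt_ia; split => //; lia.
have [w' w'_ker w'_faces] :=
  ker_horn_extend le_an (or_introl erefl) ne_ak below_range w_ker w_below.
by exists w' => // i lt_ia; apply: w'_faces; lia.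
Qed.

Lemma ker_horn_fill_above d : d <= n.+2 - k ->
  exists2 w, in_kernel w & forall i, i <= n.+2 -> i != k ->
    (i < k) || (n.+2 - d < i) -> face i w = y i.
Proof.
elim: d => [|d IH] le_d.
  have [w w_ker w_below] := ker_horn_fill_below (leqnn k).
  by exists w => // i le_in _ /orP[/w_below // | ]; lia.
have [w w_ker w_D] := IH (ltnW le_d).
have le_tn : n.+1 - d <= n.+1 by lia.
have j_t : n.+2 - d = n.+1 - d \/ n.+2 - d = (n.+1 - d).+1 by lia.
have ne_jk : n.+2 - d != k by lia.
pose D i := i <= n.+2 /\ i != k /\ (i < k) || (n.+2 - d < i).
have D_range i :
    D i -> [/\ i <= n.+2, i != k & (i < n.+1 - d) || ((n.+1 - d).+1 < i)].
  by rewrite /D => D_i; split; lia.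
have D_faces i : D i -> face i w = y i.
  by case=> le_in [ne_ik range_i]; apply: w_D.
have [w' w'_ker w'_faces] :=
  ker_horn_extend le_tn j_t ne_jk D_range w_ker D_faces.
by exists w' => // i le_in ne_ik range_i; apply: w'_faces; rewrite /D; lia.
Qed.

Lemma ker_horn_fill :
  exists2 w, in_kernel w & forall i, i <= n.+2 -> i != k -> face i w = y i.
Proof.
have [w w_ker w_faces] := ker_horn_fill_above (leqnn (n.+2 - k)).
by exists w => // i le_in ne_ik; apply: w_faces => //; lia.
Qed.

End KernelHornFilling.

Lemma ker_kan_fill m k (x : nat -> G m) : k <= m.+1 -> horn_compat x k ->
  (forall i, i <= m.+1 -> i != k -> in_kernel (x i)) ->
  exists2 z, in_kernel z & forall i, i <= m.+1 -> i != k -> face i z = x i.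
Proof.
case: m x => [|n] x le_k x_compat x_ker; last exact: ker_horn_fill.
exists (degen 0 (x (1 - k))).
  by apply: in_kernel_degen => //; apply: x_ker; lia.
by move=> i le_i ne_ik; rewrite face_degen_eq //; [congr x | ]; lia.
Qed.

Lemma horn_compat_mulV m k (x : nat -> G m) (w : G m.+1) :
  (forall i, i <= m.+1 -> i != k -> pi (x i) = pi (face i w)) ->
  horn_compat x k -> horn_compat (fun i => mul (x i) (inv (face i w))) k.
Proof.
case: m x w => [|n] x w // pi_xw x_compat i j lt_ij le_jn ne_ik ne_jk.
have act_xw l (p : nat) : p <= n.+2 -> p != k -> l <= n.+1 ->
    act (x p) l = act (face p w) l.
  by move=> le_p ne_pk; apply: act_eq_of_pi_eq; apply: pi_xw.
rewrite !face_mulV; try (by lia); try (by move=> l; apply: act_xw; lia).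
by rewrite x_compat // face_face.
Qed.

Lemma kan_fibration_of_surjective :
  (forall n (y : N n), exists x, pi x = y) -> is_kan_fibration pi.
Proof.
move=> pi_surj m k x y le_k x_compat x_over_y.
have [w w_y] := pi_surj _ y.
have x_over_w i : i <= m.+1 -> i != k -> pi (x i) = pi (face i w).
  by move=> le_i ne_ik; rewrite -x_over_y // pi_face // w_y.
have q_compat := horn_compat_mulV x_over_w x_compat.
have q_ker i : i <= m.+1 -> i != k -> in_kernel (mul (x i) (inv (face i w))).
  by move=> le_i ne_ik; rewrite /in_kernel piM piV x_over_w // mulgV.
have [p p_ker p_faces] := ker_kan_fill le_k q_compat q_ker.
exists (mul p w); split; last by rewrite piM p_ker mul1g w_y.
by move=> i le_i ne_ik; rewrite face_mul_ker // p_faces // mulgKV.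
Qed.

End Kernel.

Theorem theoremB1 (G N : CSG) (pi : forall n, G n -> N n)
  (Hpi : is_structural_projection pi)
  (eta : forall n, N n -> G n)
  (Heta : is_smap (X := N) (Y := G) eta)
  (Hsec : forall n (y : N n), pi n (eta n y) = y) :
  is_kan_fibration (X := G) (Y := N) pi.
Proof.
have [pi_morph _] := Hpi.
apply: (kan_fibration_of_surjective pi_morph) => n y.
by exists (eta n y).
Qed.
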